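(* Consider binary floating-point arithmetic with precision $p\ge 4$ and unit round-off $u=2^{-p}$, operations correctly rounded to nearest ($\mathrm{RN}$), barring overflow and underflow. For floating-point inputs $x,y$ consider the algorithm: if $|x|<|y|$ swap $x$ and $y$; $(s_x^h,s_x^\ell)\gets\mathrm{Fast2Mult}(x,x)$; $(s_y^h,s_y^\ell)\gets\mathrm{Fast2Mult}(y,y)$; $(\sigma_h,\sigma_\ell)\gets\mathrm{Fast2Sum}(s_x^h,s_y^h)$; $s\gets\mathrm{RN}(\sqrt{\sigma_h})$; $\delta_s\gets\mathrm{RN}(\sigma_h-s^2)$; $\tau_1\gets\mathrm{RN}(s_x^\ell+s_y^\ell)$; $\tau_2\gets\mathrm{RN}(\delta_s+\sigma_\ell)$; $\tau\gets\mathrm{RN}(\tau_1+\tau_2)$; $c\gets\mathrm{RN}(\tau/s)$; $\rho_4\gets\mathrm{RN}(c/2+s)$. Then the relative error $|\rho_4/\sqrt{x^2+y^2}-1|$ is bounded by $u+(7+\kappa)u^2$, where $\kappa\le 21.4$ if $u\le 2^{-4}$; $\kappa\le 6.1$ if $u\le 2^{-5}$; $\kappa\le 2.5$ if $u\le2^{-6}$; $\kappa\le 1.2$ if $u\le 2^{-7}$; $\kappa\le 0.6$ if $u\le 2^{-8}$; $\kappa\le 7\cdot10^{-2}$ if $u\le 2^{-11}$; $\kappa\le 8\cdot 10^{-6}$ if $u\le 2^{-24}$; $\kappa\le 2\cdot10^{-14}$ if $u\le 2^{-53}$; $\kappa\le 2\cdot 10^{-32}$ if $u\le 2^{-113}$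.
   Context: A radix-2 floating-point number of precision $p$ has the form $M\cdot 2^{e-p+1}$ with integers $|M|\le 2^p-1$ and $e_{\min}\le e\le e_{\max}$. $\mathrm{RN}$ is rounding to nearest (ties-to-even). $\mathrm{Fast2Mult}(a,b)$ returns the pair of floating-point numbers $(h,\ell)$ with $h=\mathrm{RN}(ab)$ and $\ell = ab-h$ exactly; $\mathrm{Fast2Sum}(a,b)$ returns $(h,\ell)$ with $h=\mathrm{RN}(a+b)$ and $\ell=(a+b)-h$ exactly. The computation $\delta_s = \mathrm{RN}(\sigma_h-s^2)$ is done with a single rounding (FMA). *)

(* binary floating-point arithmetic of precision p with an
   unbounded exponent range (no overflow, no underflow). *)
From Stdlib Require Import Reals Lra ZArith List.
Open Scope R_scope.

Definition is_fp (p : Z) (x : R) : Prop :=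
  exists M e : Z, x = IZR M * powerRZ 2 (e - p + 1) /\ (Z.abs M <= 2 ^ p - 1)%Z.

(* r has an even integral significand in its normalized representation
   (every nonzero float has a unique normalized one since there is no
   underflow). Zero counts as even. *)
Definition even_fp (p : Z) (r : R) : Prop :=
  r = 0 \/
  exists M e : Z, r = IZR M * powerRZ 2 (e - p + 1) /\
    (2 ^ (p - 1) <= Z.abs M <= 2 ^ p - 1)%Z /\ Z.even M = true.

Definition is_RN (p : Z) (x r : R) : Prop :=
  is_fp p r /\
  (forall f, is_fp p f -> Rabs (x - r) <= Rabs (x - f)) /\
  (forall f, is_fp p f -> f <> r -> Rabs (x - f) = Rabs (x - r) -> even_fp p r).

(* The table of (k, kappa_k): if u <= 2^-k then kappa <= kappa_k. *)
Definition kappa_table : list (Z * R) :=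
  (4%Z, 214 / 10) :: (5%Z, 61 / 10) :: (6%Z, 25 / 10) :: (7%Z, 12 / 10) ::
  (8%Z, 6 / 10) :: (11%Z, 7 / 100) :: (24%Z, 8 / 10 ^ 6) ::
  (53%Z, 2 / 10 ^ 14) :: (113%Z, 2 / 10 ^ 32) :: nil.

(* Every rounding to nearest has relative error at most u/(1+u), and the
   square-root remainder sgh - s^2 is a float, so ds is exact.  With
   sigma = x^2 + y^2 and r = sqrt sigma, the correction t approximates
   sigma - s^2 to within O(u^2) sigma, and the last step is a Newton step for
   the square root:
     2 s (c/2 + s - r) = (s - r)^2 + (t - (sigma - s^2)) + (c s - t),
   whose three terms are O(u^2) r^2.  Hence c/2 + s is within
   (8u^2 + 55u^3) r of r when u <= 1/16; the final rounding adds u/(1+u), and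
   every row of the table satisfies 64u + 110u^2 <= kappa. *)

From Stdlib Require Import Reals ZArith List Lra Lia Psatz.
Open Scope R_scope.

Local Notation bpow e := (powerRZ 2 e).

Lemma bpow_gt_0 e : 0 < bpow e.
Proof. apply powerRZ_lt; lra. Qed.

Lemma bpow_plus e f : bpow (e + f) = bpow e * bpow f.
Proof. apply powerRZ_add; lra. Qed.

Lemma IZR_Zpower_bpow k : (0 <= k)%Z -> IZR (2 ^ k) = bpow k.
Proof.
  destruct k as [|k|k]; intros Hk; [reflexivity| |lia].
  rewrite <- Zpower_pos_powerRZ; reflexivity.
Qed.

Lemma bpow_le e f : (e <= f)%Z -> bpow e <= bpow f.
Proof.
  intros Hef; rewrite !powerRZ_Rpower by lra.
  apply Rle_Rpower; [lra|now apply IZR_le].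
Qed.

Lemma Rabs_le_inv x b : Rabs x <= b -> - b <= x <= b.
Proof. unfold Rabs; destruct (Rcase_abs x); lra. Qed.

Lemma is_fp_scaled p M e : (Z.abs M <= 2 ^ p - 1)%Z -> is_fp p (IZR M * bpow e).
Proof.
  intros HM; exists M, (e + p - 1)%Z; split; [|exact HM].
  do 2 f_equal; ring.
Qed.

Lemma is_fp_bpow p e : (1 <= p)%Z -> is_fp p (bpow e).
Proof.
  intros Hp; rewrite <- (Rmult_1_l (bpow e)); apply is_fp_scaled.
  assert (2 ^ 1 <= 2 ^ p)%Z by (apply Z.pow_le_mono_r; lia).
  simpl in *; lia.
Qed.

Lemma is_fp_scaled_lt p N e B : (B <= 2 ^ p)%Z ->
  Rabs (IZR N * bpow e) < IZR B * bpow e -> is_fp p (IZR N * bpow e).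
Proof.
  intros HB Hlt; apply is_fp_scaled.
  pose proof (bpow_gt_0 e).
  rewrite Rabs_mult, (Rabs_right (bpow e)), <- abs_IZR in Hlt by lra.
  apply Rmult_lt_reg_r, lt_IZR in Hlt; [lia|lra].
Qed.

Lemma is_fp_opp p x : is_fp p x -> is_fp p (- x).
Proof.
  intros [M [e [-> HM]]]; exists (- M)%Z, e; split.
  - rewrite opp_IZR; ring.
  - rewrite Z.abs_opp; exact HM.
Qed.

(* Only optimality of RN matters below. *)
Definition is_nearest (p : Z) (x r : R) : Prop :=
  is_fp p r /\ forall f, is_fp p f -> Rabs (x - r) <= Rabs (x - f).

Lemma is_RN_nearest p x r : is_RN p x r -> is_nearest p x r.
Proof. intros [Hr [Hopt _]]; split; assumption. Qed.

Lemma nearest_opp p x r : is_nearest p x r -> is_nearest p (- x) (- r).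
Proof.
  intros [Hr Hopt]; split; [now apply is_fp_opp|].
  intros f Hf; specialize (Hopt (- f) (is_fp_opp _ _ Hf)).
  replace (- x - - r) with (- (x - r)) by ring.
  replace (- x - f) with (- (x - - f)) by ring.
  now rewrite !Rabs_Ropp.
Qed.

Lemma nearest_exact p x r : is_fp p x -> is_nearest p x r -> r = x.
Proof.
  intros Hx [_ Hopt]; specialize (Hopt x Hx).
  rewrite Rminus_diag, Rabs_R0 in Hopt.
  unfold Rabs in Hopt; destruct Rcase_abs in Hopt; lra.
Qed.

Lemma nearest_same_side p x r f : is_nearest p x r -> is_fp p f ->
  0 < (x - r) * (f - r) -> Rabs (x - r) <= Rabs (f - r) / 2.
Proof.
  intros [_ Hopt] Hf Hside; specialize (Hopt f Hf).
  unfold Rabs in *; repeat destruct Rcase_abs; nra.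
Qed.

Section Nearest.

Variable p : Z.
Hypothesis Hp : (1 <= p)%Z.

Lemma Zpow_pred_gt_0 : (0 < 2 ^ (p - 1))%Z.
Proof. apply Z.pow_pos_nonneg; lia. Qed.

Lemma Zpow_double_pred : (2 ^ p = 2 * 2 ^ (p - 1))%Z.
Proof. rewrite <- Z.pow_succ_r by lia; f_equal; lia. Qed.

Lemma is_fp_pos_normal r : is_fp p r -> 0 < r ->
  exists m e, r = IZR m * bpow e /\ (2 ^ (p - 1) <= m <= 2 ^ p - 1)%Z.
Proof.
  intros [M [e [Hr HM]]] Hpos.
  assert (HM0 : (0 < M)%Z).
  { apply lt_IZR; pose proof (bpow_gt_0 (e - p + 1)); nra. }
  destruct (Z.log2_spec M HM0) as [L1 L2].
  assert (Hl : (Z.log2 M < p)%Z) by (apply Z.log2_lt_pow2; lia).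
  pose proof (Z.log2_nonneg M).
  set (k := (p - 1 - Z.log2 M)%Z).
  exists (M * 2 ^ k)%Z, (e - p + 1 - k)%Z; split.
  - rewrite Hr, mult_IZR, IZR_Zpower_bpow by lia.
    rewrite Rmult_assoc, <- bpow_plus; do 2 f_equal; ring.
  - assert (0 < 2 ^ k)%Z by (apply Z.pow_pos_nonneg; lia).
    replace (p - 1)%Z with (Z.log2 M + k)%Z by lia.
    replace (2 ^ p)%Z with (2 ^ Z.succ (Z.log2 M) * 2 ^ k)%Z
      by (rewrite <- Z.pow_add_r by lia; f_equal; lia).
    rewrite Z.pow_add_r by lia; nia.
Qed.

Section Normal.

Variables (x r : R) (m e : Z).
Hypothesis Hnear : is_nearest p x r.
Hypothesis Hr : r = IZR m * bpow e.
Hypothesis Hm : (2 ^ (p - 1) <= m <= 2 ^ p - 1)%Z.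

Lemma nearest_half_ulp : Rabs (x - r) <= bpow e / 2.
Proof.
  pose proof (bpow_gt_0 e).
  assert (Hsucc : is_fp p (IZR (m + 1) * bpow e)).
  { destruct (Z.eq_dec (m + 1) (2 ^ p)) as [->|].
    - rewrite IZR_Zpower_bpow, <- bpow_plus by lia; now apply is_fp_bpow.
    - apply is_fp_scaled; lia. }
  assert (Hpred : is_fp p (IZR (m - 1) * bpow e)) by (apply is_fp_scaled; lia).
  rewrite plus_IZR in Hsucc; rewrite minus_IZR in Hpred.
  destruct (Rtotal_order x r) as [Hx|[->|Hx]].
  - assert (Hgap : Rabs ((IZR m - 1) * bpow e - r) = bpow e)
      by (rewrite Hr, <- Rabs_Ropp, Rabs_right; [ring|nra]).
    rewrite <- Hgap; apply (nearest_same_side p); [exact Hnear|exact Hpred|subst r; nra].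
  - rewrite Rminus_diag, Rabs_R0; lra.
  - assert (Hgap : Rabs ((IZR m + 1) * bpow e - r) = bpow e)
      by (rewrite Hr, Rabs_right; [ring|nra]).
    rewrite <- Hgap; apply (nearest_same_side p); [exact Hnear|exact Hsucc|subst r; nra].
Qed.

(* Just below a power of two the floats are twice as dense. *)
Lemma nearest_below_binade_start : m = (2 ^ (p - 1))%Z -> x < r ->
  r - x <= bpow e / 4.
Proof.
  intros Hme Hx.
  pose proof Zpow_pred_gt_0; pose proof Zpow_double_pred.
  assert (Hpred : is_fp p (IZR (2 ^ p - 1) * bpow (e - 1))) by (apply is_fp_scaled; lia).
  assert (He : bpow e = 2 * bpow (e - 1)).
  { replace e with (1 + (e - 1))%Z at 1 by ring; rewrite bpow_plus; simpl; ring. }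
  assert (Hr' : r = 2 * IZR (2 ^ (p - 1)) * bpow (e - 1)) by (rewrite Hr, Hme, He; ring).
  assert (Hh : 1 <= IZR (2 ^ (p - 1))) by (apply IZR_le; lia).
  rewrite minus_IZR, Zpow_double_pred, mult_IZR in Hpred.
  pose proof (bpow_gt_0 (e - 1)).
  assert (Hgap : Rabs ((2 * IZR (2 ^ (p - 1)) - 1) * bpow (e - 1) - r) = bpow (e - 1))
    by (rewrite Hr', <- Rabs_Ropp, Rabs_right; [ring|nra]).
  pose proof (nearest_same_side _ _ _ _ Hnear Hpred) as Hside.
  rewrite Hgap, Rabs_left in Hside by lra.
  rewrite He; apply Rmult_le_reg_l with 2; [lra|].
  enough (- (x - r) <= bpow (e - 1) / 2) by lra.
  apply Hside; rewrite Hr'; nra.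
Qed.

End Normal.

Lemma nearest_zero x : is_nearest p x 0 -> x = 0.
Proof.
  intros [_ Hopt].
  destruct (Req_dec x 0) as [|Hx]; [assumption|exfalso].
  pose proof (Rabs_pos_lt _ Hx) as Ha.
  destruct (archimed (/ Rabs x)) as [Hn _].
  set (n := up (/ Rabs x)) in *.
  assert (Hn0 : (0 < n)%Z) by (apply lt_IZR; pose proof (Rinv_0_lt_compat _ Ha); lra).
  assert (Hsmall : bpow (- n) < Rabs x).
  { pose proof (Z.pow_gt_lin_r 2 n ltac:(lia) ltac:(lia)) as Hg.
    apply IZR_lt in Hg; rewrite IZR_Zpower_bpow in Hg by lia.
    rewrite powerRZ_neg' by lra.
    rewrite <- (Rinv_inv (Rabs x)).
    apply Rinv_lt_contravar; [|lra].
    apply Rmult_lt_0_compat; [now apply Rinv_0_lt_compat|apply bpow_gt_0]. }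
  pose proof (bpow_gt_0 (- n)).
  destruct (Rle_lt_dec 0 x).
  - specialize (Hopt _ (is_fp_bpow _ (- n) Hp)).
    unfold Rabs in *; repeat destruct Rcase_abs; lra.
  - specialize (Hopt _ (is_fp_opp _ _ (is_fp_bpow _ (- n) Hp))).
    unfold Rabs in *; repeat destruct Rcase_abs; lra.
Qed.

Lemma nearest_rel_error_pos x r : is_nearest p x r -> 0 < r ->
  (1 + bpow (- p)) * Rabs (x - r) <= bpow (- p) * Rabs x.
Proof.
  intros Hnear Hr0.
  destruct (is_fp_pos_normal r (proj1 Hnear) Hr0) as [m [e [Hr Hm]]].
  pose proof (nearest_half_ulp x r m e Hnear Hr Hm) as Hhalf.
  pose proof (nearest_below_binade_start x r m e Hnear Hr) as Hbelow.
  assert (bpow (- p) <= / 2) by (eapply Rle_trans; [apply (bpow_le _ (- 1)); lia|simpl; lra]).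
  pose proof (bpow_gt_0 (- p)); pose proof (bpow_gt_0 e).
  set (u := bpow (- p)) in *.
  assert (Hu : u * IZR (2 ^ (p - 1)) = / 2).
  { unfold u; rewrite IZR_Zpower_bpow, <- bpow_plus by lia.
    replace (- p + (p - 1))%Z with (-1)%Z by ring; simpl; field. }
  assert (Hur : u * r = bpow e / 2 + u * (IZR m - IZR (2 ^ (p - 1))) * bpow e)
    by (replace (bpow e / 2) with (u * IZR (2 ^ (p - 1)) * bpow e) by (rewrite Hu; field);
        rewrite Hr; ring).
  assert (Hh : IZR (2 ^ (p - 1)) <= IZR m) by (apply IZR_le; lia).
  assert (0 <= u * (IZR m - IZR (2 ^ (p - 1))) * bpow e).
  { apply Rmult_le_pos; [apply Rmult_le_pos|]; lra. }
  assert (Hr_half : bpow e / 2 < r).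
  { assert (1 <= IZR m) by (apply (IZR_le 1); pose proof Zpow_pred_gt_0; lia).
    rewrite Hr; nra. }
  apply Rabs_le_inv in Hhalf.
  destruct (Rle_lt_dec r x).
  - rewrite !Rabs_right by lra; nra.
  - rewrite Rabs_left, Rabs_right by lra.
    enough ((1 + 2 * u) * (r - x) <= u * r) by lra.
    destruct (Z.eq_dec m (2 ^ (p - 1))) as [Hme|Hme].
    + specialize (Hbelow Hme ltac:(lra)); nra.
    + assert (1 <= IZR m - IZR (2 ^ (p - 1))) by (rewrite <- minus_IZR; apply (IZR_le 1); lia).
      assert (u * bpow e <= u * (IZR m - IZR (2 ^ (p - 1))) * bpow e).
      { apply Rmult_le_compat_r; [lra|]; rewrite <- (Rmult_1_r u) at 1.
        apply Rmult_le_compat_l; lra. }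
      nra.
Qed.

Lemma nearest_rel_error x r : is_nearest p x r ->
  (1 + bpow (- p)) * Rabs (x - r) <= bpow (- p) * Rabs x.
Proof.
  intros Hnear.
  destruct (Rtotal_order r 0) as [Hr|[->|Hr]].
  - pose proof (nearest_rel_error_pos _ _ (nearest_opp _ _ _ Hnear) ltac:(lra)) as Hopp.
    replace (- x - - r) with (- (x - r)) in Hopp by ring.
    now rewrite !Rabs_Ropp in Hopp.
  - rewrite (nearest_zero x Hnear), Rminus_0_r, Rabs_R0.
    pose proof (bpow_gt_0 (- p)); lra.
  - now apply nearest_rel_error_pos.
Qed.

Lemma nearest_rel_error_le x r : is_nearest p x r -> Rabs (x - r) <= bpow (- p) * Rabs x.
Proof.
  intros Hnear; pose proof (nearest_rel_error x r Hnear).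
  pose proof (bpow_gt_0 (- p)); pose proof (Rabs_pos (x - r)); nra.
Qed.

End Nearest.

Lemma sqrt_remainder_is_fp p g s : (2 <= p)%Z -> is_fp p g ->
  is_nearest p (sqrt g) s -> is_fp p (g - s * s).
Proof.
  intros Hp Hg Hnear.
  destruct (Rle_lt_dec g 0) as [Hg0|Hg0].
  { rewrite sqrt_neg_0 in Hnear by exact Hg0.
    assert (Hzero : is_fp p 0) by (exists 0%Z, 0%Z; split; [ring|lia]).
    rewrite (nearest_exact p 0 s Hzero Hnear), Rmult_0_l, Rminus_0_r; exact Hg. }
  pose proof (sqrt_lt_R0 g Hg0) as Hv; pose proof (sqrt_sqrt g ltac:(lra)) as Hvv.
  pose proof (nearest_rel_error_le p ltac:(lia) _ _ Hnear) as Hrel.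
  set (v := sqrt g) in *.
  rewrite (Rabs_right v) in Hrel by lra; apply Rabs_le_inv in Hrel.
  assert (bpow (- p) <= / 4) by (eapply Rle_trans; [apply (bpow_le _ (- 2)); lia|simpl; lra]).
  pose proof (bpow_gt_0 (- p)).
  set (u := bpow (- p)) in *.
  assert (Hs0 : 0 < s) by nra.
  assert (Hrem : Rabs (g - s * s) = Rabs (v - s) * (v + s))
    by (rewrite <- Hvv, <- (Rabs_right (v + s)), <- Rabs_mult by lra; f_equal; ring).
  destruct Hg as [M [e [Eg HM]]]; set (E := (e - p + 1)%Z) in Eg.
  destruct (is_fp_pos_normal p ltac:(lia) s (proj1 Hnear) Hs0) as [S [F [ES HS]]].
  pose proof (nearest_half_ulp p ltac:(lia) _ _ S F Hnear ES HS) as Hhalf.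
  pose proof (bpow_gt_0 F).
  (* If E <= 2F, g - s^2 is a multiple of 2^E smaller than g in magnitude;
     otherwise it is a multiple of 2^(2F) of magnitude at most (S + 1/4) 2^(2F). *)
  destruct (Z_le_gt_dec E (F + F)).
  - assert (HFF : bpow F * bpow F = bpow (F + F - E) * bpow E)
      by (rewrite <- !bpow_plus; f_equal; ring).
    assert (Hsplit : g - s * s = IZR (M - S * S * 2 ^ (F + F - E)) * bpow E).
    { rewrite Eg, ES, minus_IZR, !mult_IZR, IZR_Zpower_bpow by lia.
      replace (IZR S * bpow F * (IZR S * bpow F)) with (IZR S * IZR S * (bpow F * bpow F))
        by ring.
      rewrite HFF; ring. }
    rewrite Hsplit; apply is_fp_scaled_lt with M; [lia|].
    rewrite <- Hsplit, <- Eg, Hrem.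
    assert (Rabs (v - s) * (v + s) <= u * v * ((2 + u) * v))
      by (apply Rmult_le_compat; [apply Rabs_pos|lra|apply Rabs_le; lra|lra]).
    nra.
  - assert (Hsplit : g - s * s = IZR (M * 2 ^ (E - (F + F)) - S * S) * bpow (F + F)).
    { assert (HE : bpow E = bpow (E - (F + F)) * (bpow F * bpow F))
        by (rewrite <- !bpow_plus; f_equal; ring).
      rewrite Eg, ES, minus_IZR, !mult_IZR, IZR_Zpower_bpow, bpow_plus, HE by lia; ring. }
    rewrite Hsplit; apply is_fp_scaled_lt with (S + 1)%Z; [lia|].
    rewrite <- Hsplit, Hrem, plus_IZR, bpow_plus.
    apply Rabs_le_inv in Hhalf.
    assert (Rabs (v - s) * (v + s) <= bpow F / 2 * (2 * s + bpow F / 2))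
      by (apply Rmult_le_compat; [apply Rabs_pos|lra|apply Rabs_le; lra|lra]).
    rewrite ES in *; nra.
Qed.

Lemma bounds_from_square_bounds (l h x y : R) : 0 <= l -> 0 <= h -> 0 <= x -> 0 <= y ->
  l * l * (y * y) <= x * x <= h * h * (y * y) -> l * y <= x <= h * y.
Proof.
  intros Hl Hh Hx Hy [Hlo Hhi]; split.
  - destruct (Rle_lt_dec (l * y) x) as [|Hlt]; [assumption|].
    assert (x * x < (l * y) * (l * y)) by (apply Rmult_le_0_lt_compat; lra); nra.
  - destruct (Rle_lt_dec x (h * y)) as [|Hlt]; [assumption|].
    assert ((h * y) * (h * y) < x * x) by (apply Rmult_le_0_lt_compat; nra); nra.
Qed.

Lemma error_polynomial_bound u : 0 < u <= / 16 ->
  (2 * u + u ^ 2) ^ 2 + (1 + u) * (u * (2 + u) * (u + ((1 + u) ^ 4 - (1 + u))))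
    + u * ((1 + u) ^ 4 - 1)
  <= 2 * (1 - u) ^ 2 * (8 * u ^ 2 + 55 * u ^ 3).
Proof.
  intros Hu.
  assert (0 < 44 - 239 * u + 89 * u ^ 2 - 7 * u ^ 3 - u ^ 4) by nra.
  assert (0 < u ^ 3) by (apply pow_lt; lra).
  enough (0 <= u ^ 3 * (44 - 239 * u + 89 * u ^ 2 - 7 * u ^ 3 - u ^ 4)) by nra.
  apply Rmult_le_pos; lra.
Qed.

Lemma Rabs_le_of_rel_error u x y : Rabs (x - y) <= u * Rabs x -> Rabs y <= (1 + u) * Rabs x.
Proof.
  intros H; pose proof (Rabs_triang_inv y x) as Htri.
  rewrite Rabs_minus_sym in Htri; lra.
Qed.

Lemma newton_correction_identity sigma r s t c : r * r = sigma ->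
  2 * s * (c / 2 + s - r) = (s - r) ^ 2 + (t - (sigma - s * s)) + (c * s - t).
Proof. intros Hrr; rewrite <- Hrr; field. Qed.

Section Error_analysis.

Variables (u a b sxh sxl syh syl sgh sgl s ds t1 t2 t c : R).
Hypothesis Hu : 0 < u <= / 16.
Hypothesis Hsig : 0 < a * a + b * b.
Hypothesis Hsxh : Rabs (a * a - sxh) <= u * Rabs (a * a).
Hypothesis Hsxl : sxl = a * a - sxh.
Hypothesis Hsyh : Rabs (b * b - syh) <= u * Rabs (b * b).
Hypothesis Hsyl : syl = b * b - syh.
Hypothesis Hsgh : Rabs (sxh + syh - sgh) <= u * Rabs (sxh + syh).
Hypothesis Hsgl : sgl = sxh + syh - sgh.
Hypothesis Hs : Rabs (sqrt sgh - s) <= u * Rabs (sqrt sgh).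
Hypothesis Hds : ds = sgh - s * s.
Hypothesis Ht1 : Rabs (sxl + syl - t1) <= u * Rabs (sxl + syl).
Hypothesis Ht2 : Rabs (ds + sgl - t2) <= u * Rabs (ds + sgl).
Hypothesis Ht : Rabs (t1 + t2 - t) <= u * Rabs (t1 + t2).
Hypothesis Hc : Rabs (t / s - c) <= u * Rabs (t / s).

Let sigma := a * a + b * b.
Let r := sqrt sigma.

Lemma sum_of_squares_rounded : (1 - u) * sigma <= sxh + syh <= (1 + u) * sigma.
Proof.
  rewrite (Rabs_right (a * a)) in Hsxh by nra; rewrite (Rabs_right (b * b)) in Hsyh by nra.
  apply Rabs_le_inv in Hsxh; apply Rabs_le_inv in Hsyh.
  unfold sigma; lra.
Qed.

Lemma sqrt_rounded_square :
  0 < s /\ (1 - u) ^ 3 * (sxh + syh) <= s * s <= (1 + u) ^ 3 * (sxh + syh).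
Proof.
  pose proof sum_of_squares_rounded as HS1.
  assert (HS0 : 0 < sxh + syh) by (unfold sigma in HS1; nra).
  rewrite (Rabs_right (sxh + syh)) in Hsgh by lra; apply Rabs_le_inv in Hsgh.
  assert (Hg0 : 0 < sgh) by nra.
  pose proof (sqrt_lt_R0 sgh Hg0) as Hv; pose proof (sqrt_sqrt sgh ltac:(lra)) as Hvv.
  rewrite (Rabs_right (sqrt sgh)) in Hs by lra; apply Rabs_le_inv in Hs.
  set (v := sqrt sgh) in *.
  assert (Hlo : 0 <= (1 - u) * v <= s) by nra.
  assert (Hhi : s <= (1 + u) * v) by lra.
  split; [nra|split].
  - apply Rle_trans with ((1 - u) ^ 2 * sgh); [|rewrite <- Hvv; nra].
    replace ((1 - u) ^ 3 * (sxh + syh)) with ((1 - u) ^ 2 * ((1 - u) * (sxh + syh))) by ring.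
    apply Rmult_le_compat_l; [apply pow2_ge_0|lra].
  - apply Rle_trans with ((1 + u) ^ 2 * sgh); [rewrite <- Hvv; nra|].
    replace ((1 + u) ^ 3 * (sxh + syh)) with ((1 + u) ^ 2 * ((1 + u) * (sxh + syh))) by ring.
    apply Rmult_le_compat_l; [apply pow2_ge_0|lra].
Qed.

Lemma sqrt_sigma_spec : 0 < r /\ r * r = sigma.
Proof. split; [apply sqrt_lt_R0 | apply sqrt_sqrt, Rlt_le]; exact Hsig. Qed.

Lemma sqrt_rounded_close : (1 - u) ^ 2 * r <= s <= (1 + u) ^ 2 * r.
Proof.
  pose proof sum_of_squares_rounded as HS1.
  destruct sqrt_rounded_square as [Hs0 Hss].
  destruct sqrt_sigma_spec as [Hr Hrr].
  apply bounds_from_square_bounds; try apply pow2_ge_0; try lra.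
  rewrite Hrr; split.
  - apply Rle_trans with ((1 - u) ^ 3 * ((1 - u) * sigma)); [right; ring|].
    apply Rle_trans with ((1 - u) ^ 3 * (sxh + syh)); [|lra].
    apply Rmult_le_compat_l; [apply pow_le|]; lra.
  - apply Rle_trans with ((1 + u) ^ 3 * ((1 + u) * sigma)); [|right; ring].
    apply Rle_trans with ((1 + u) ^ 3 * (sxh + syh)); [lra|].
    apply Rmult_le_compat_l; [apply pow_le|]; lra.
Qed.

Lemma low_parts_bound : Rabs (sxl + syl) <= u * sigma.
Proof.
  rewrite (Rabs_right (a * a)) in Hsxh by nra; rewrite (Rabs_right (b * b)) in Hsyh by nra.
  apply Rabs_le_inv in Hsxh; apply Rabs_le_inv in Hsyh.
  apply Rabs_le; unfold sigma; lra.
Qed.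

Lemma sqrt_residual_bound : Rabs (ds + sgl) <= ((1 + u) ^ 4 - (1 + u)) * sigma.
Proof.
  pose proof sum_of_squares_rounded as HS1.
  destruct sqrt_rounded_square as [_ Hss].
  replace (ds + sgl) with (sxh + syh - s * s) by (rewrite Hds, Hsgl; ring).
  assert (HS0 : 0 <= sxh + syh) by (unfold sigma in HS1; nra).
  assert (Hsym : 1 - (1 - u) ^ 3 <= (1 + u) ^ 3 - 1) by nra.
  assert (((1 + u) ^ 3 - 1) * (sxh + syh) <= ((1 + u) ^ 3 - 1) * ((1 + u) * sigma))
    by (apply Rmult_le_compat_l; nra).
  assert ((1 - (1 - u) ^ 3) * (sxh + syh) <= ((1 + u) ^ 3 - 1) * (sxh + syh))
    by (apply Rmult_le_compat_r; lra).
  apply Rabs_le; split; nra.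
Qed.

Lemma correction_term_error :
  Rabs (t - (sigma - s * s)) <= u * (2 + u) * (u + ((1 + u) ^ 4 - (1 + u))) * sigma.
Proof.
  pose proof low_parts_bound as HL; pose proof sqrt_residual_bound as HA.
  replace (sigma - s * s) with ((sxl + syl) + (ds + sgl))
    by (unfold sigma; rewrite Hsxl, Hsyl, Hds, Hsgl; ring).
  set (L := sxl + syl) in *; set (A := ds + sgl) in *.
  assert (Ht12 : Rabs (t1 + t2) <= (1 + u) * (Rabs L + Rabs A)).
  { pose proof (Rabs_triang t1 t2).
    pose proof (Rabs_le_of_rel_error _ _ _ Ht1); pose proof (Rabs_le_of_rel_error _ _ _ Ht2); lra. }
  assert (Htri : Rabs (t - (L + A)) <= Rabs (t1 + t2 - t) + Rabs (L - t1) + Rabs (A - t2)).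
  { replace (t - (L + A)) with (- ((t1 + t2 - t) + (L - t1) + (A - t2))) by ring.
    rewrite Rabs_Ropp.
    pose proof (Rabs_triang (t1 + t2 - t + (L - t1)) (A - t2)).
    pose proof (Rabs_triang (t1 + t2 - t) (L - t1)); lra. }
  assert (u * Rabs (t1 + t2) <= u * ((1 + u) * (Rabs L + Rabs A)))
    by (apply Rmult_le_compat_l; lra).
  assert (u * (2 + u) * (Rabs L + Rabs A)
          <= u * (2 + u) * ((u + ((1 + u) ^ 4 - (1 + u))) * sigma))
    by (apply Rmult_le_compat_l; nra).
  nra.
Qed.

Lemma square_residual_bound : Rabs (sigma - s * s) <= ((1 + u) ^ 4 - 1) * sigma.
Proof.
  destruct sqrt_sigma_spec as [Hr Hrr]; pose proof sqrt_rounded_close as Hclose.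
  rewrite <- Hrr; apply Rabs_le.
  assert (s * s <= ((1 + u) ^ 2 * r) * ((1 + u) ^ 2 * r)) by (apply Rmult_le_compat; nra).
  assert (((1 - u) ^ 2 * r) * ((1 - u) ^ 2 * r) <= s * s) by (apply Rmult_le_compat; nra).
  nra.
Qed.

Lemma correction_rounding_error : Rabs (c * s - t) <= u * Rabs t.
Proof.
  destruct sqrt_rounded_square as [Hs0 _].
  replace (c * s - t) with (- ((t / s - c) * s)) by (field; lra).
  rewrite Rabs_Ropp, Rabs_mult, (Rabs_right s) by lra.
  replace (Rabs t) with (Rabs (t / s) * s)
    by (unfold Rdiv; rewrite Rabs_mult, Rabs_inv, (Rabs_right s) by lra; field; lra).
  rewrite <- Rmult_assoc; apply Rmult_le_compat_r; lra.
Qed.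

Lemma error_before_last_rounding : Rabs (c / 2 + s - r) <= (8 * u ^ 2 + 55 * u ^ 3) * r.
Proof.
  destruct sqrt_sigma_spec as [Hr Hrr].
  destruct sqrt_rounded_square as [Hs0 _].
  pose proof sqrt_rounded_close as Hclose.
  pose proof correction_term_error as Htau; pose proof square_residual_bound as Hres.
  pose proof correction_rounding_error as Hcs.
  set (T := (1 + u) ^ 4 - 1) in Hres.
  set (Dt := u * (2 + u) * (u + ((1 + u) ^ 4 - (1 + u)))) in Htau.
  assert (Hsr2 : (s - r) ^ 2 <= (2 * u + u ^ 2) ^ 2 * sigma).
  { assert (Hsr : Rabs (s - r) <= (2 * u + u ^ 2) * r) by (apply Rabs_le; nra).
    rewrite <- Hrr, <- Rsqr_pow2, Rsqr_abs, Rsqr_pow2.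
    replace ((2 * u + u ^ 2) ^ 2 * (r * r)) with (((2 * u + u ^ 2) * r) ^ 2) by ring.
    apply pow_incr; split; [apply Rabs_pos|exact Hsr]. }
  assert (Ht_le : Rabs t <= (T + Dt) * sigma).
  { replace t with ((sigma - s * s) + (t - (sigma - s * s))) by ring.
    pose proof (Rabs_triang (sigma - s * s) (t - (sigma - s * s))); lra. }
  assert (Hmain : 2 * s * Rabs (c / 2 + s - r)
                  <= ((2 * u + u ^ 2) ^ 2 + (1 + u) * Dt + u * T) * sigma).
  { rewrite <- (Rabs_right (2 * s)), <- Rabs_mult by lra.
    rewrite (newton_correction_identity sigma r s t c Hrr).
    pose proof (Rabs_triang ((s - r) ^ 2 + (t - (sigma - s * s))) (c * s - t)).
    pose proof (Rabs_triang ((s - r) ^ 2) (t - (sigma - s * s))).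
    rewrite (Rabs_right ((s - r) ^ 2)) in * by (apply Rle_ge, pow2_ge_0).
    assert (u * Rabs t <= u * ((T + Dt) * sigma)) by (apply Rmult_le_compat_l; lra).
    nra. }
  pose proof (error_polynomial_bound u Hu) as Hpoly; fold T Dt in Hpoly.
  assert (0 <= 8 * u ^ 2 + 55 * u ^ 3) by nra.
  apply Rmult_le_reg_l with (2 * s); [lra|].
  apply Rle_trans with (2 * (1 - u) ^ 2 * (8 * u ^ 2 + 55 * u ^ 3) * (r * r)).
  { rewrite Hrr; eapply Rle_trans; [exact Hmain|].
    apply Rmult_le_compat_r; [exact (Rlt_le _ _ Hsig)|lra]. }
  assert ((1 - u) ^ 2 * r * ((8 * u ^ 2 + 55 * u ^ 3) * r) <= s * ((8 * u ^ 2 + 55 * u ^ 3) * r))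
    by (apply Rmult_le_compat_r; nra).
  nra.
Qed.

End Error_analysis.

Lemma rounded_approx_error u H r z rho : 0 < u -> 0 < r -> 0 <= H ->
  Rabs (z - r) <= H * r -> (1 + u) * Rabs (z - rho) <= u * Rabs z ->
  (1 + u) * Rabs (rho - r) <= (u + (1 + 2 * u) * H) * r.
Proof.
  intros Hu Hr HH Hz Hrho.
  assert (Hzr : Rabs z <= r + Rabs (z - r)).
  { replace z with (r + (z - r)) at 1 by ring.
    pose proof (Rabs_triang r (z - r)); rewrite (Rabs_right r) in * by lra; lra. }
  assert (Htri : Rabs (rho - r) <= Rabs (z - r) + Rabs (z - rho)).
  { replace (rho - r) with ((z - r) + (rho - z)) by ring.
    rewrite (Rabs_minus_sym z rho); apply Rabs_triang. }
  assert (u * Rabs z <= u * (r + Rabs (z - r))) by (apply Rmult_le_compat_l; lra).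
  assert ((1 + 2 * u) * Rabs (z - r) <= (1 + 2 * u) * (H * r)) by (apply Rmult_le_compat_l; lra).
  assert ((1 + u) * Rabs (rho - r) <= (1 + u) * (Rabs (z - r) + Rabs (z - rho)))
    by (apply Rmult_le_compat_l; lra).
  lra.
Qed.

Lemma inv_quadratic_le N kappa : 0 < N -> 64 * N + 110 <= kappa * N * N ->
  64 * / N + 110 * (/ N) ^ 2 <= kappa.
Proof.
  intros HN Hkappa.
  apply Rmult_le_reg_r with (N * N); [nra|].
  replace ((64 * / N + 110 * (/ N) ^ 2) * (N * N)) with (64 * N + 110) by (field; lra).
  lra.
Qed.

Lemma kappa_table_spec k kappa : In (k, kappa) kappa_table ->
  64 * bpow (- k) + 110 * bpow (- k) ^ 2 <= kappa.
Proof.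
  intros Hin; simpl in Hin.
  repeat (destruct Hin as [Hin|Hin];
    [injection Hin as <- <-; rewrite powerRZ_neg', <- IZR_Zpower_bpow by lia;
     match goal with |- context [IZR ?z] => let v := eval vm_compute in z in change z with v end;
     apply inv_quadratic_le; [apply IZR_lt; reflexivity|lra]|]).
  contradiction.
Qed.

Lemma rounded_approx_rel_error u kappa r z rho : 0 < u -> 64 * u + 110 * u ^ 2 <= kappa -> 0 < r ->
  Rabs (z - r) <= (8 * u ^ 2 + 55 * u ^ 3) * r -> (1 + u) * Rabs (z - rho) <= u * Rabs z ->
  Rabs (rho / r - 1) <= u + (7 + kappa) * u ^ 2.
Proof.
  intros Hu Hkappa Hr Hz Hrho.
  assert (HH : 0 <= 8 * u ^ 2 + 55 * u ^ 3) by nra.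
  pose proof (rounded_approx_error u _ r z rho Hu Hr HH Hz Hrho) as Herr.
  assert (Hpoly : u + (1 + 2 * u) * (8 * u ^ 2 + 55 * u ^ 3) <= (1 + u) * (u + (7 + kappa) * u ^ 2)).
  { assert (u ^ 2 * (64 * u + 110 * u ^ 2) <= u ^ 2 * (kappa * (1 + u))) by (apply Rmult_le_compat_l; nra).
    nra. }
  replace (rho / r - 1) with ((rho - r) / r) by (field; lra).
  unfold Rdiv; rewrite Rabs_mult, Rabs_inv, (Rabs_right r) by lra.
  apply Rmult_le_reg_r with r; [lra|]; rewrite Rmult_assoc, Rinv_l, Rmult_1_r by lra.
  apply Rmult_le_reg_l with (1 + u); [lra|].
  assert (((u + (1 + 2 * u) * (8 * u ^ 2 + 55 * u ^ 3))) * r <= (1 + u) * (u + (7 + kappa) * u ^ 2) * r)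
    by (apply Rmult_le_compat_r; lra).
  lra.
Qed.

Theorem theorem4 (p : Z) (Hp : (4 <= p)%Z) (x y : R)
  (Hx : is_fp p x) (Hy : is_fp p y) (Hxy : x <> 0 \/ y <> 0)
  (a b sxh sxl syh syl sgh sgl s ds t1 t2 t c rho4 : R)
  (Hswap : (a, b) = (if Rlt_dec (Rabs x) (Rabs y) then (y, x) else (x, y)))
  (Hsxh : is_RN p (a * a) sxh) (Hsxl : sxl = a * a - sxh)
  (Hsyh : is_RN p (b * b) syh) (Hsyl : syl = b * b - syh)
  (Hsgh : is_RN p (sxh + syh) sgh) (Hsgl : sgl = (sxh + syh) - sgh)
  (Hs : is_RN p (sqrt sgh) s)
  (Hds : is_RN p (sgh - s * s) ds)
  (Ht1 : is_RN p (sxl + syl) t1)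
  (Ht2 : is_RN p (ds + sgl) t2)
  (Ht : is_RN p (t1 + t2) t)
  (Hc : is_RN p (t / s) c)
  (Hrho : is_RN p (c / 2 + s) rho4) :
  forall (k : Z) (kappa : R), In (k, kappa) kappa_table ->
    powerRZ 2 (- p) <= powerRZ 2 (- k) ->
    Rabs (rho4 / sqrt (x * x + y * y) - 1)
      <= powerRZ 2 (- p) + (7 + kappa) * (powerRZ 2 (- p)) ^ 2.
Proof.
  intros k kappa Hin Hk.
  pose proof (bpow_gt_0 (- p)) as Hu0.
  assert (Hu : bpow (- p) <= / 16)
    by (eapply Rle_trans; [apply (bpow_le _ (- 4)); lia|simpl; lra]).
  assert (Hkappa : 64 * bpow (- p) + 110 * bpow (- p) ^ 2 <= kappa).
  { pose proof (kappa_table_spec k kappa Hin).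
    pose proof (pow_incr _ _ 2 (conj (Rlt_le _ _ Hu0) Hk)); lra. }
  assert (Hsum : a * a + b * b = x * x + y * y)
    by (destruct (Rlt_dec (Rabs x) (Rabs y)); injection Hswap as -> ->; ring).
  assert (Hsig : 0 < a * a + b * b).
  { rewrite Hsum; destruct Hxy as [Hx0|Hy0];
      [pose proof (Rsqr_pos_lt x Hx0)|pose proof (Rsqr_pos_lt y Hy0)]; unfold Rsqr in *; nra. }
  assert (Hrel : forall v w, is_RN p v w -> Rabs (v - w) <= bpow (- p) * Rabs v)
    by (intros v w Hvw; apply nearest_rel_error_le; [lia|now apply is_RN_nearest]).
  assert (Hds_exact : ds = sgh - s * s).
  { apply (nearest_exact p); [|now apply is_RN_nearest].
    apply sqrt_remainder_is_fp; [lia|exact (proj1 Hsgh)|now apply is_RN_nearest]. }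
  rewrite <- Hsum.
  apply (rounded_approx_rel_error _ kappa _ (c / 2 + s)); [lra|exact Hkappa|now apply sqrt_lt_R0| |].
  - apply (error_before_last_rounding _ a b sxh sxl syh syl sgh sgl s ds t1 t2 t c);
      auto; split; assumption.
  - apply nearest_rel_error; [lia|now apply is_RN_nearest].
Qed.
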